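(* Let $\mathcal V$, $\mathbb B$, the stable orientation $\theta$ on smooth morphisms and the characteristic class $c\ell$ be as follows: $\mathcal V$ is the category of (quasi-projective) algebraic varieties over a field $k$ or of compact reduced complex analytic spaces (proper maps confined, all fiber squares independent); $\mathbb B$ is a bivariant theory on $\mathcal V$ in which each smooth $f:X\to Y$ has a stable orientation $\theta(f)\in\mathbb B(X\xrightarrow{f}Y)$; $c\ell$ assigns to each vector bundle $V$ on $X$ an element $c\ell(V)\in\mathbb B^*(X)$, contravariantly functorial, multiplicative on short exact sequences, with $c\ell(T_{pt})=1_{pt}$, and with $\theta(f)\bullet c\ell(V)=f^*c\ell(V)\bullet\theta(f)$ for smooth $f:X\to Y$, $V$ on $Y$. Put $\mathbb M_*(\mathcal V/X):=\mathbb M(\mathcal V/X\to pt)$ and $\mathbb B_*(X):=\mathbb B(X\to pt)$, both covariant for proper morphisms via bivariant pushforward. Then there is a unique natural transformation ${\gamma_{c\ell}}_*:\mathbb M_*(\mathcal V/-)\to\mathbb B_*(-)$ (of functors covariant for proper morphisms) such that for every smooth variety $X$, $${\gamma_{c\ell}}_*([X\xrightarrow{\mathrm{id}_X}X])=c\ell(TX)\cap[X],$$ where $[X]:=\theta(p)\in\mathbb B_*(X)$ for the smooth constant map $p:X\to pt$ and $\cap$ denotes the bivariant product $\mathbb B^*(X)\otimes\mathbb B_*(X)\to\mathbb B_*(X)$.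
   Context: $\mathbb M(\mathcal V/X\xrightarrow{f}Y)$ is the free abelian group on isomorphism classes $[V\xrightarrow{h}X]$ of proper morphisms $h$ with $f\circ h$ smooth; so $\mathbb M_*(\mathcal V/X)$ is free on classes $[V\xrightarrow{h}X]$ with $h$ proper and $V$ smooth, and for proper $g:X\to X'$, $g_*[V\xrightarrow{h}X]=[V\xrightarrow{g\circ h}X']$. $\mathbb B^*(X):=\mathbb B(X\xrightarrow{\mathrm{id}_X}X)$. A stable orientation satisfies $\theta(g\circ f)=\theta(f)\bullet\theta(g)$, $\theta(\mathrm{id})=1$, and $\theta(f')=g^*\theta(f)$ under base change. *)

From HB Require Import structures.
From mathcomp Require Import all_boot all_algebra.
From mathcomp Require Import boolp.
From mathcomp Require Import freeg.

Set Implicit Arguments.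
Unset Strict Implicit.
Unset Printing Implicit Defensive.

Import GRing.Theory.
Local Open Scope ring_scope.

Definition tr {A : Type} {P : A -> Type} {x y : A} (e : x = y) (p : P x) : P y :=
  eq_rect x P p y e.

Record Cat := {
  Ob : Type;
  Hom : Ob -> Ob -> Type;
  idm : forall X, Hom X X;
  cmp : forall X Y Z, Hom Y Z -> Hom X Y -> Hom X Z;
  cmp_idl : forall X Y (f : Hom X Y), cmp (idm Y) f = f;
  cmp_idr : forall X Y (f : Hom X Y), cmp f (idm X) = f;
  cmp_assoc : forall X Y Z W (f : Hom X Y) (g : Hom Y Z) (h : Hom Z W),
      cmp h (cmp g f) = cmp (cmp h g) f;
  pt : Ob;
  to_pt : forall X, Hom X pt;
  to_pt_uniq : forall X (f : Hom X pt), f = to_pt X;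
  proper : forall X Y, Hom X Y -> Prop;
  smooth : forall X Y, Hom X Y -> Prop;
  proper_id : forall X, proper (idm X);
  proper_cmp : forall X Y Z (f : Hom X Y) (g : Hom Y Z),
      proper f -> proper g -> proper (cmp g f);
  smooth_id : forall X, smooth (idm X);
  smooth_cmp : forall X Y Z (f : Hom X Y) (g : Hom Y Z),
      smooth f -> smooth g -> smooth (cmp g f);
  Bun : Ob -> Type;
  bpull : forall X Y, Hom X Y -> Bun Y -> Bun X;
  bpull_id : forall X (V : Bun X), bpull (idm X) V = V;
  bpull_cmp : forall X Y Z (f : Hom X Y) (g : Hom Y Z) (V : Bun Z),
      bpull (cmp g f) V = bpull f (bpull g V);
  ses : forall X, Bun X -> Bun X -> Bun X -> Prop;      (* 0 -> V' -> V -> V'' -> 0 *)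
  tangent : forall X, Bun X;                              (* T X (for smooth X) *)
  iso_proper : forall X Y (u : Hom X Y) (v : Hom Y X),
      cmp v u = idm X -> cmp u v = idm Y -> proper u;
  iso_smooth : forall X Y (u : Hom X Y) (v : Hom Y X),
      cmp v u = idm X -> cmp u v = idm Y -> smooth u;
  iso_tangent : forall X Y (u : Hom X Y) (v : Hom Y X),
      cmp v u = idm X -> cmp u v = idm Y -> tangent X = bpull u (tangent Y)
}.

Arguments idm {C} X : rename.
Arguments cmp {C X Y Z} : rename.
Arguments pt {C} : rename.
Arguments to_pt {C} X : rename.
Arguments proper {C X Y} : rename.
Arguments smooth {C X Y} : rename.
Arguments bpull {C X Y} : rename.
Arguments ses {C X} : rename.
Arguments tangent {C} X : rename.

Record Biv (C : Cat) := {
  B : forall X Y : Ob C, Hom X Y -> zmodType;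
  bprod : forall X Y Z (f : Hom X Y) (g : Hom Y Z), B f -> B g -> B (cmp g f);
  bprodDl : forall X Y Z (f : Hom X Y) (g : Hom Y Z) (a a' : B f) (b : B g),
      bprod (a + a') b = bprod a b + bprod a' b;
  bprodDr : forall X Y Z (f : Hom X Y) (g : Hom Y Z) (a : B f) (b b' : B g),
      bprod a (b + b') = bprod a b + bprod a b';
  bprodA : forall X Y Z W (f : Hom X Y) (g : Hom Y Z) (h : Hom Z W)
      (a : B f) (b : B g) (c : B h),
      @tr _ (fun k : Hom X W => B k) _ _ (esym (cmp_assoc f g h)) (bprod a (bprod b c)) = bprod (bprod a b) c;
  bone : forall X, B (idm X);
  bone_l : forall X Y (f : Hom X Y) (a : B f), @tr _ (fun k : Hom X Y => B k) _ _ (cmp_idr f) (bprod (bone X) a) = a;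
  bone_r : forall X Y (f : Hom X Y) (a : B f), @tr _ (fun k : Hom X Y => B k) _ _ (cmp_idl f) (bprod a (bone Y)) = a;
  bpush : forall X Y Z (f : Hom X Y) (g : Hom Y Z), proper f -> B (cmp g f) -> B g;
  bpushD : forall X Y Z (f : Hom X Y) (g : Hom Y Z) (pf : proper f) (a a' : B (cmp g f)),
      bpush pf (a + a') = bpush pf a + bpush pf a';
  bpush_cmp : forall X Y Z W (f : Hom X Y) (g : Hom Y Z) (h : Hom Z W)
      (pf : proper f) (pg : proper g) (a : B (cmp h (cmp g f))),
      @bpush X Z W (cmp g f) h (proper_cmp pf pg) a
      = @bpush Y Z W g h pg (@bpush X Y W f (cmp h g) pf (@tr _ (fun k : Hom X W => B k) _ _ (cmp_assoc f g h) a));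
  bpush_prod : forall X X' Y Z (f : Hom X X') (g : Hom X' Y) (h : Hom Y Z)
      (pf : proper f) (a : B (cmp g f)) (b : B h),
      @bpush X X' Z f (cmp h g) pf
        (@tr _ (fun k : Hom X Z => B k) _ _ (cmp_assoc f g h) (bprod a b))
      = bprod (@bpush X X' Y f g pf a) b;
  bpullstar : forall X Y (f : Hom X Y), B (idm Y) -> B (idm X);
  bpullstar_id : forall X (a : B (idm X)), bpullstar (idm X) a = a;
  bpullstar_cmp : forall X Y Z (f : Hom X Y) (g : Hom Y Z) (a : B (idm Z)),
      bpullstar (cmp g f) a = bpullstar f (bpullstar g a)
}.

Arguments B {C} b {X Y} : rename.
Arguments bprod {C} b {X Y Z f g} : rename.
Arguments bone {C} b X : rename.
Arguments bpush {C} b {X Y Z f} g : rename.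
Arguments bpullstar {C} b {X Y} : rename.

Definition trB {C} (b : Biv C) {X Y : Ob C} {f f' : Hom X Y} (e : f = f')
  (x : B b f) : B b f' := @tr _ (fun k => B b k) _ _ e x.
Arguments trB {C} b {X Y f f'} e x.

Definition Bup {C} (b : Biv C) (X : Ob C) := B b (idm X).
Definition Blow {C} (b : Biv C) (X : Ob C) := B b (to_pt X).

(* covariant pushforward g_* : B_*(X) -> B_*(X') for proper g : X -> X'
   (bivariant pushforward, B(X -> pt) = B(X -(p_X' o g)-> pt) -> B(X' -> pt)) *)
Definition Blow_push {C} (b : Biv C) (X X' : Ob C) (g : Hom X X') (pg : proper g)
  (a : Blow b X) : Blow b X' :=
  bpush b (to_pt X') pg (trB b (esym (to_pt_uniq (cmp (to_pt X') g))) a).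

Definition bcap {C} (b : Biv C) (X : Ob C) (a : Bup b X) (m : Blow b X) : Blow b X :=
  trB b (cmp_idr (to_pt X)) (bprod b a m).

Record Orient (C : Cat) (b : Biv C) := {
  theta : forall X Y (f : Hom X Y), smooth f -> B b f;
  theta_cmp : forall X Y Z (f : Hom X Y) (g : Hom Y Z)
      (sf : smooth f) (sg : smooth g) (sgf : smooth (cmp g f)),
      theta sgf = bprod b (theta sf) (theta sg);
  theta_id : forall X (s : smooth (idm X)), theta s = bone b X;
  theta_iso : forall X Y (u : Hom X Y) (v : Hom Y X) (su : smooth u) (pu : proper u),
      cmp v u = idm X -> cmp u v = idm Y ->
      bpush b (idm Y) pu (trB b (esym (cmp_idl u)) (theta su)) = bone b Y
}.

Arguments theta {C b} o {X Y f} : rename.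

Definition fund {C} {b : Biv C} (o : Orient b) (X : Ob C) (sX : smooth (to_pt X))
  : Blow b X := theta o sX.

Record CharCl (C : Cat) (b : Biv C) (o : Orient b) := {
  cl : forall X, Bun X -> Bup b X;
  cl_pull : forall X Y (f : Hom X Y) (V : Bun Y),
      cl (bpull f V) = bpullstar b f (cl V);
  cl_ses : forall X (V' V V'' : Bun X), ses V' V V'' ->
      cl V = trB b (cmp_idl (idm X)) (bprod b (cl V') (cl V''));
  cl_pt : cl (tangent (@pt C)) = bone b pt;
  cl_theta : forall X Y (f : Hom X Y) (sf : smooth f) (V : Bun Y),
      trB b (cmp_idl f) (bprod b (theta o sf) (cl V))
      = trB b (cmp_idr f) (bprod b (bpullstar b f (cl V)) (theta o sf))
}.

Arguments cl {C b o} c {X} : rename.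

Definition Gen (C : Cat) (X : Ob C) : Type :=
  {V : Ob C & {h : Hom V X | proper h /\ smooth (to_pt V)}}.

Definition gen_iso (C : Cat) (X : Ob C) (g1 g2 : Gen X) : Prop :=
  exists (u : Hom (projT1 g1) (projT1 g2)) (v : Hom (projT1 g2) (projT1 g1)),
    [/\ cmp v u = idm _, cmp u v = idm _ &
        cmp (proj1_sig (projT2 g2)) u = proj1_sig (projT2 g1)].

Definition IsoCl (C : Cat) (X : Ob C) : Type :=
  {classic {P : Gen X -> Prop | exists g, P = gen_iso g}}.

Definition cls (C : Cat) (X : Ob C) (g : Gen X) : IsoCl X :=
  exist (fun P => exists g, P = gen_iso g) (gen_iso g) (ex_intro _ g erefl).

Definition rep (C : Cat) (X : Ob C) (c : IsoCl X) : Gen X :=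
  projT1 (cid (proj2_sig c)).

Definition M (C : Cat) (X : Ob C) : zmodType := {freeg (IsoCl X) / int}.

Definition mgen (C : Cat) (X V : Ob C) (h : Hom V X) (ph : proper h)
  (sV : smooth (to_pt V)) : M X :=
  << cls (existT _ V (exist _ h (conj ph sV)) : Gen X) >>.

Definition gen_push (C : Cat) (X X' : Ob C) (g : Hom X X') (pg : proper g)
  (x : Gen X) : Gen X' :=
  let: existT V (exist h (conj ph sV)) := x in
  existT _ V (exist _ (cmp g h) (conj (proper_cmp ph pg) sV)).

Definition M_push (C : Cat) (X X' : Ob C) (g : Hom X X') (pg : proper g)
  (m : M X) : M X' :=
  fglift (fun c : IsoCl X => (<< cls (gen_push pg (rep c)) >> : {freeg (IsoCl X') / int})) m.

Definition natural (C : Cat) (b : Biv C)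
  (gam : forall X : Ob C, {additive M X -> Blow b X}) : Prop :=
  forall (X X' : Ob C) (g : Hom X X') (pg : proper g) (m : M X),
    gam X' (M_push pg m) = Blow_push pg (gam X m).

Definition normalized (C : Cat) (b : Biv C) (o : Orient b) (c : CharCl o)
  (gam : forall X : Ob C, {additive M X -> Blow b X}) : Prop :=
  forall (X : Ob C) (sX : smooth (to_pt X)),
    gam X (mgen (proper_id X) sX) = bcap (cl c (tangent X)) (fund o sX).

(* Every generator [V -h-> X] of M_*(V/X) is h_*[V -id-> V] with V smooth, so a natural
   transformation normalized by gamma[V -id-> V] = cl(TV) cap [V] is forced to send it to
   h_*(cl(TV) cap [V]), and additivity then fixes it on all of M_*(V/X).  Conversely this
   formula is well defined on isomorphism classes: for an isomorphism u : V1 -> V2 the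
   axioms theta(p2 o u) = theta(u) . theta(p2), TV1 = u^*TV2, cl(u^*TV2) . theta(u) =
   theta(u) . cl(TV2) and u_* theta(u) = 1 give u_*(cl(TV1) cap [V1]) = cl(TV2) cap [V2];
   naturality holds on generators because pushforward is functorial. *)

From Pilot Require Import Defs.
From HB Require Import structures.
From mathcomp Require Import all_boot all_algebra.
From mathcomp Require Import boolp freeg.
(* Otherwise mathcomp's [Hom] (vector.v) shadows the field [Hom] of a category. *)
Import Defs.

Set Implicit Arguments.
Unset Strict Implicit.
Unset Printing Implicit Defensive.
Import GRing.Theory.
Local Open Scope ring_scope.

Section HeterogeneousEquality.
Variables (C : Cat) (b : Biv C).
Implicit Types X Y Z W : Ob C.

Definition heq X Y (f f' : Hom X Y) (x : B b f) (y : B b f') : Prop :=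
  exists e : f = f', trB b e x = y.

Lemma heq_eq X Y (f : Hom X Y) (x y : B b f) : heq x y -> x = y.
Proof. by case=> e <-; rewrite (Prop_irrelevance e erefl). Qed.

Lemma heq_refl X Y (f : Hom X Y) (x : B b f) : heq x x.
Proof. by exists erefl. Qed.

Lemma heq_sym X Y (f f' : Hom X Y) (x : B b f) (y : B b f') : heq x y -> heq y x.
Proof. by case=> e; case: f' / e y => y <-; exists erefl. Qed.

Lemma heq_trans X Y (f f' f'' : Hom X Y) (x : B b f) (y : B b f') (z : B b f'') :
  heq x y -> heq y z -> heq x z.
Proof. by case=> e; case: f' / e y => y <- [e']; case: f'' / e' z => z <-; exists erefl. Qed.

Lemma heq_trB X Y (f f' : Hom X Y) (e : f = f') (x : B b f) : heq x (trB b e x).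
Proof. by exists e. Qed.

Lemma heq_trBl X Y (f f' : Hom X Y) (e : f = f') (x : B b f) : heq (trB b e x) x.
Proof. exact/heq_sym/heq_trB. Qed.

Lemma heq_bprod X Y Z (f f' : Hom X Y) (g g' : Hom Y Z)
    (x : B b f) (x' : B b f') (y : B b g) (y' : B b g') :
  heq x x' -> heq y y' -> heq (bprod b x y) (bprod b x' y').
Proof.
by case=> e; case: f' / e x' => x' <- [e]; case: g' / e y' => y' <-; exists erefl.
Qed.

Lemma heq_bpush X Y Z (f : Hom X Y) (g g' : Hom Y Z) (pf : proper f)
    (x : B b (cmp g f)) (y : B b (cmp g' f)) :
  g = g' -> heq x y -> heq (bpush b g pf x) (bpush b g' pf y).
Proof. by move=> e; case: g' / e y => y /heq_eq ->; apply: heq_refl. Qed.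

Lemma heq_bprodA X Y Z W (f : Hom X Y) (g : Hom Y Z) (h : Hom Z W)
    (x : B b f) (y : B b g) (z : B b h) :
  heq (bprod b x (bprod b y z)) (bprod b (bprod b x y) z).
Proof. by rewrite -bprodA; apply: heq_trB. Qed.

Lemma heq_bone_l X Y (f : Hom X Y) (x : B b f) : heq (bprod b (bone b X) x) x.
Proof. by rewrite -[in X in heq _ X](bone_l x); apply: heq_trB. Qed.

Lemma trB_is_additive X Y (f f' : Hom X Y) (e : f = f') : GRing.zmod_morphism (trB b e).
Proof. by case: f' / e. Qed.

End HeterogeneousEquality.

Section Orientation.
Variables (C : Cat) (b : Biv C) (o : Orient b) (c : CharCl o).
Implicit Types X Y Z : Ob C.

Lemma heq_theta X Y (f f' : Hom X Y) (sf : smooth f) (sf' : smooth f') :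
  f = f' -> heq (theta o sf) (theta o sf').
Proof.
by move=> e; case: f' / e sf' => sf'; rewrite (Prop_irrelevance sf sf'); apply: heq_refl.
Qed.

Lemma heq_theta_cl X Y (f : Hom X Y) (sf : smooth f) (V : Bun Y) :
  heq (bprod b (theta o sf) (cl c V)) (bprod b (bpullstar b f (cl c V)) (theta o sf)).
Proof. by apply: heq_trans (heq_trB (cmp_idl f) _) _; rewrite cl_theta; apply: heq_trBl. Qed.

Lemma bpush_theta_iso X Y Z (u : Hom X Y) (v : Hom Y X) (su : smooth u) (pu : proper u)
    (h : Hom Y Z) (x : B b h) :
  cmp v u = idm X -> cmp u v = idm Y -> bpush b h pu (bprod b (theta o su) x) = x.
Proof.
move=> vu uv; apply: heq_eq.
apply: (heq_trans (y := bpush b (cmp h (idm Y)) pu (trB b (cmp_assoc u (idm Y) h)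
          (bprod b (trB b (esym (cmp_idl u)) (theta o su)) x)))).
  apply: heq_bpush; first by rewrite cmp_idr.
  apply: heq_trans (heq_trB _ _).
  by apply: heq_bprod; [apply: heq_trB | apply: heq_refl].
by rewrite bpush_prod (theta_iso o su pu vu uv); apply: heq_bone_l.
Qed.

End Orientation.

Section CovariantPushforward.
Variables (C : Cat) (b : Biv C).
Implicit Types X Y Z : Ob C.

Lemma Blow_pushE X X' (g : Hom X X') (pg : proper g) (x : Blow b X)
    (y : B b (cmp (to_pt X') g)) :
  heq x y -> Blow_push pg x = bpush b (to_pt X') pg y.
Proof. by move=> xy; congr bpush; apply/heq_eq/(heq_trans (heq_trBl _ _)). Qed.

Lemma Blow_push_cmp X Y Z (f : Hom X Y) (g : Hom Y Z) (pf : proper f) (pg : proper g)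
    (x : Blow b X) :
  Blow_push (proper_cmp pf pg) x = Blow_push pg (Blow_push pf x).
Proof.
apply: heq_eq; rewrite /Blow_push bpush_cmp; apply: heq_bpush => //.
apply: heq_trans (heq_trB _ _); apply: heq_bpush; first exact: to_pt_uniq.
by apply: heq_trans (heq_trBl _ _) _; apply: heq_trans (heq_trBl _ _) (heq_trB _ _).
Qed.

Lemma Blow_push_is_additive X X' (g : Hom X X') (pg : proper g) :
  GRing.zmod_morphism (@Blow_push C b X X' g pg).
Proof.
move=> x y; rewrite /Blow_push trB_is_additive.
by apply/eqP; rewrite eq_sym subr_eq -bpushD subrK.
Qed.

HB.instance Definition _ X X' (g : Hom X X') (pg : proper g) :=
  GRing.isZmodMorphism.Build (Blow b X) (Blow b X') (Blow_push pg)
    (Blow_push_is_additive pg).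

End CovariantPushforward.

Section FundamentalClass.
Variables (C : Cat) (b : Biv C) (o : Orient b) (c : CharCl o).

Definition cl_fund V (sV : smooth (to_pt V)) : Blow b V :=
  bcap (cl c (tangent V)) (fund o sV).

Section Isomorphism.
Variables (V1 V2 : Ob C) (u : Hom V1 V2) (v : Hom V2 V1).
Hypotheses (vu : cmp v u = idm V1) (uv : cmp u v = idm V2).
Variables (s1 : smooth (to_pt V1)) (s2 : smooth (to_pt V2)).

Let su : smooth u := iso_smooth vu uv.

Lemma heq_cl_fund_iso : heq (cl_fund s1) (bprod b (theta o su) (cl_fund s2)).
Proof.
rewrite /cl_fund /bcap /fund (iso_tangent vu uv) cl_pull.
set P := cl c (tangent V2).
apply: heq_trans (heq_trBl _ _) _.
apply: (heq_trans (y := bprod b (bpullstar b u P) (bprod b (theta o su) (theta o s2)))).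
  apply: heq_bprod; first exact: heq_refl.
  rewrite -(theta_cmp o su s2 (smooth_cmp su s2)).
  exact: heq_theta (esym (to_pt_uniq _)).
apply: heq_trans (heq_bprodA _ _ _) _.
apply: heq_trans (heq_bprod (heq_sym (heq_theta_cl c su (tangent V2))) (heq_refl _)) _.
apply: heq_trans (heq_sym (heq_bprodA _ _ _)) _.
exact: heq_bprod (heq_refl _) (heq_trB _ _).
Qed.

Lemma Blow_push_cl_fund_iso (pu : proper u) : Blow_push pu (cl_fund s1) = cl_fund s2.
Proof. by rewrite (Blow_pushE pu heq_cl_fund_iso); apply: bpush_theta_iso vu uv. Qed.

End Isomorphism.

Lemma Blow_push_id_cl_fund V (sV : smooth (to_pt V)) :
  Blow_push (proper_id V) (cl_fund sV) = cl_fund sV.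
Proof. exact: (Blow_push_cl_fund_iso (cmp_idl (idm V)) (cmp_idl (idm V))). Qed.

End FundamentalClass.

Section IsomorphismClasses.
Variable C : Cat.
Implicit Types X Y : Ob C.

Lemma gen_iso_refl X (x : Gen X) : gen_iso x x.
Proof. by exists (idm _), (idm _); split; rewrite ?cmp_idl ?cmp_idr. Qed.

Lemma gen_iso_sym X (x y : Gen X) : gen_iso x y -> gen_iso y x.
Proof. by case=> u [v [vu uv e]]; exists v, u; split; rewrite // -e -cmp_assoc uv cmp_idr. Qed.

Lemma gen_iso_trans X (x y z : Gen X) : gen_iso x y -> gen_iso y z -> gen_iso x z.
Proof.
case=> u [v [vu uv e]] [u' [v' [vu' uv' e']]]; exists (cmp u' u), (cmp v v'); split.
- by rewrite cmp_assoc -(cmp_assoc u' v' v) vu' cmp_idr.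
- by rewrite cmp_assoc -(cmp_assoc v u u') uv cmp_idr.
- by rewrite cmp_assoc e'.
Qed.

Lemma gen_push_iso X X' (g : Hom X X') (pg : proper g) (x y : Gen X) :
  gen_iso x y -> gen_iso (gen_push pg x) (gen_push pg y).
Proof.
case: x => V1 [h1 [ph1 s1]]; case: y => V2 [h2 [ph2 s2]].
by case=> /= u [v [vu uv e]]; exists u, v; split; rewrite //= -cmp_assoc e.
Qed.

Lemma cls_eq X (x y : Gen X) : gen_iso x y -> cls x = cls y.
Proof.
move=> xy; apply: eq_exist; apply/funext => z; apply/propext.
by split; [apply: gen_iso_trans (gen_iso_sym xy) | apply: gen_iso_trans xy].
Qed.

Lemma cls_rep X (k : IsoCl X) : cls (rep k) = k.
Proof. by case: k => P Pk; apply: eq_exist; rewrite /rep; case: cid. Qed.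

Lemma rep_cls X (x : Gen X) : gen_iso x (rep (cls x)).
Proof. by rewrite /rep; case: cid => y /= ->; apply: gen_iso_refl. Qed.

Lemma M_push_is_additive X X' (g : Hom X X') (pg : proper g) :
  GRing.zmod_morphism (M_push pg).
Proof. exact: lift_is_additive. Qed.

HB.instance Definition _ X X' (g : Hom X X') (pg : proper g) :=
  GRing.isZmodMorphism.Build (M X) (M X') (M_push pg) (M_push_is_additive pg).

Lemma M_push_cls X X' (g : Hom X X') (pg : proper g) (x : Gen X) :
  M_push pg << cls x >> = << cls (gen_push pg x) >>.
Proof.
rewrite /M_push liftU scale1r; congr << _ >>.
exact/esym/cls_eq/gen_push_iso/rep_cls.
Qed.

End IsomorphismClasses.

Lemma freeg_additive_eq (K : choiceType) (V : zmodType)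
    (f g : {additive {freeg K / int} -> V}) :
  (forall k, f << k >> = g << k >>) -> f =1 g.
Proof.
move=> fg; elim/freeg_ind_dom0 => [|z k D _ _ IH]; first by rewrite !raddf0.
by rewrite !raddfD IH -[z]intz -freegU_mulz !raddfMz fg.
Qed.

Section Gamma.
Variables (C : Cat) (b : Biv C) (o : Orient b) (c : CharCl o).
Implicit Types X Y : Ob C.

Definition gamma_gen X (x : Gen X) : Blow b X :=
  let: existT V (exist h (conj ph sV)) := x in Blow_push ph (cl_fund c sV).

Lemma gamma_gen_iso X (x y : Gen X) : gen_iso x y -> gamma_gen x = gamma_gen y.
Proof.
case: x => V1 [h1 [ph1 s1]]; case: y => V2 [h2 [ph2 s2]] [/= u [v [vu uv e]]].
subst h1; rewrite (Prop_irrelevance ph1 (proper_cmp (iso_proper vu uv) ph2)).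
by rewrite Blow_push_cmp (Blow_push_cl_fund_iso c vu uv).
Qed.

Lemma gamma_gen_push X X' (g : Hom X X') (pg : proper g) (x : Gen X) :
  gamma_gen (gen_push pg x) = Blow_push pg (gamma_gen x).
Proof. by case: x => V [h [ph sV]]; apply: Blow_push_cmp. Qed.

Definition gamma_fun X : M X -> Blow b X :=
  fglift (fun k : IsoCl X => gamma_gen (rep k) : zmodule (Blow b X)).

Lemma gamma_fun_is_additive X : GRing.zmod_morphism (@gamma_fun X).
Proof.
exact: (lift_is_additive (fun k : IsoCl X => gamma_gen (rep k) : zmodule (Blow b X))).
Qed.

HB.instance Definition _ X :=
  GRing.isZmodMorphism.Build (M X) (Blow b X) (@gamma_fun X) (@gamma_fun_is_additive X).

Definition gamma X : {additive M X -> Blow b X} := @gamma_fun X.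

Lemma gamma_cls X (x : Gen X) : gamma X << cls x >> = gamma_gen x.
Proof. by rewrite /= /gamma_fun liftU scale1r; apply/esym/gamma_gen_iso/rep_cls. Qed.

Lemma gamma_natural : natural gamma.
Proof.
move=> X X' g pg; apply: (freeg_additive_eq (f := gamma X' \o M_push pg)
                                            (g := Blow_push pg \o gamma X)) => k /=.
by rewrite -(cls_rep k) M_push_cls !gamma_cls gamma_gen_push.
Qed.

Lemma gamma_normalized : normalized c gamma.
Proof. by move=> X sX; rewrite gamma_cls; apply: Blow_push_id_cl_fund. Qed.

Lemma natural_normalized_cls (gam : forall X, {additive M X -> Blow b X}) :
  natural gam -> normalized c gam -> forall X (x : Gen X), gam X << cls x >> = gamma_gen x.
Proof.
move=> gam_nat gam_norm X [V [h [ph sV]]].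
have -> : << cls (existT _ V (exist _ h (conj ph sV))) >> = M_push ph (mgen (proper_id V) sV).
  rewrite /mgen M_push_cls; congr << _ >>; apply: cls_eq.
  by exists (idm V), (idm V); split; rewrite /= ?cmp_idl ?cmp_idr.
by rewrite gam_nat gam_norm.
Qed.

End Gamma.

Theorem corollary1p5 (C : Cat) (b : Biv C) (o : Orient b) (c : CharCl o) :
  exists gam : forall X : Ob C, {additive M X -> Blow b X},
    [/\ natural gam, normalized c gam &
        forall gam' : forall X : Ob C, {additive M X -> Blow b X},
          natural gam' -> normalized c gam' ->
          forall (X : Ob C) (m : M X), gam' X m = gam X m].
Proof.
exists (gamma c); split; [exact: gamma_natural | exact: gamma_normalized |].
move=> gam gam_nat gam_norm X; apply: freeg_additive_eq => k.
by rewrite -(cls_rep k) gamma_cls (natural_normalized_cls gam_nat gam_norm).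
Qed.
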